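(* Let $(A,\gamma)$ be a quasiordered set. If $\mathrm{hsdim}(A,\gamma)=1$, then $\gamma$ is a half-space, and $\dim\bigl(A/(\gamma\cap\gamma^{-1}),r_\gamma\bigr)=1$ if $\gamma$ has no empty box with more than one element, while $\dim\bigl(A/(\gamma\cap\gamma^{-1}),r_\gamma\bigr)=2$ if $\gamma$ has an empty box with more than one element. If $\mathrm{hsdim}(A,\gamma)\ge2$, then $\dim\bigl(A/(\gamma\cap\gamma^{-1}),r_\gamma\bigr)=\mathrm{hsdim}(A,\gamma)$.
   Context: A quasiorder on $A$ is a reflexive and transitive relation; $\Delta_A=\{(a,a)\mid a\in A\}$. A quasiorder $\alpha$ on $A$ is a half-space if there is a quasiorder $\beta$ on $A$ with $\alpha\cup\beta=A\times A$ and $\alpha\cap\beta=\Delta_A$; then $\beta=\Delta_A\cup((A\times A)\setminus\alpha)$. The boxes of a half-space $\alpha$ are the classes of the equivalence relation $\varepsilon=(\alpha\cap\alpha^{-1})\cup(\beta\cap\beta^{-1})$; a box $B$ is empty if $\alpha\cap(B\times B)=\Delta_B$ and full if $|B|>1$ and $B\times B\subseteq\alpha$ (every box is either full or empty). A half-space realizer of a quasiorder $\gamma$ on $A$ is a set $\{\alpha_i\mid i\in I\}$ of half-spaces on $A$ with $\bigcap_{i\in I}\alpha_i=\gamma$; $\mathrm{hsdim}(A,\gamma)$ is the minimum cardinality of a half-space realizer. $r_\gamma$ is the induced partial order on $A/(\gamma\cap\gamma^{-1})$: $([a],[b])\in r_\gamma$ iff $(a,b)\in\gamma$. $\dim$ denotes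 order dimension: the least cardinality of a set of linear extensions whose intersection is the given partial order. *)

(* relations as A -> A -> Prop on an arbitrary (possibly
   infinite) carrier type; cardinalities are compared via injections. *)

Definition rel (A : Type) := A -> A -> Prop.

Definition diag {A : Type} : rel A := fun a b => a = b.

Definition quasiorder {A : Type} (g : rel A) : Prop :=
  (forall a, g a a) /\ (forall a b c, g a b -> g b c -> g a c).

Definition half_space {A : Type} (al : rel A) : Prop :=
  quasiorder al /\
  exists be : rel A, quasiorder be /\
    (forall a b, al a b \/ be a b) /\
    (forall a b, (al a b /\ be a b) <-> a = b).

Definition hs_complement {A : Type} (al : rel A) : rel A :=
  fun a b => a = b \/ ~ al a b.

Definition box_rel {A : Type} (al : rel A) : rel A :=
  fun a b => (al a b /\ al b a) \/
             (hs_complement al a b /\ hs_complement al b a).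

Definition is_box {A : Type} (al : rel A) (B : A -> Prop) : Prop :=
  exists a, forall x, B x <-> box_rel al a x.

Definition empty_box {A : Type} (al : rel A) (B : A -> Prop) : Prop :=
  forall x y, B x -> B y -> (al x y <-> x = y).

Definition has_big_empty_box {A : Type} (al : rel A) : Prop :=
  exists B : A -> Prop, is_box al B /\ empty_box al B /\
    exists x y, B x /\ B y /\ x <> y.

Definition card_le (I J : Type) : Prop :=
  exists f : I -> J, forall i j, f i = f j -> i = j.

(* A half-space realizer of gamma indexed by I (the intersection of the
   empty family is A x A). *)
Definition hs_realizer {A : Type} (g : rel A) (I : Type) : Prop :=
  exists al : I -> rel A, (forall i, half_space (al i)) /\
    (forall a b, (forall i, al i a b) <-> g a b).

Definition is_hsdim {A : Type} (g : rel A) (I : Type) : Prop :=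
  hs_realizer g I /\ forall J : Type, hs_realizer g J -> card_le I J.

Definition gclass {A : Type} (g : rel A) (a : A) : A -> Prop :=
  fun b => g a b /\ g b a.

Definition quot {A : Type} (g : rel A) : Type :=
  { S : A -> Prop | exists a, S = gclass g a }.

Definition r_of {A : Type} (g : rel A) : rel (quot g) :=
  fun S T => exists a b, proj1_sig S = gclass g a /\
                         proj1_sig T = gclass g b /\ g a b.

Definition linear_order {P : Type} (L : rel P) : Prop :=
  (forall x, L x x) /\ (forall x y, L x y -> L y x -> x = y) /\
  (forall x y z, L x y -> L y z -> L x z) /\ (forall x y, L x y \/ L y x).

Definition linear_extension {P : Type} (r L : rel P) : Prop :=
  linear_order L /\ (forall x y, r x y -> L x y).

Definition dim_realizer {P : Type} (r : rel P) (I : Type) : Prop :=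
  exists L : I -> rel P, (forall i, linear_extension r (L i)) /\
    (forall x y, (forall i, L i x y) <-> r x y).

Definition is_dim {P : Type} (r : rel P) (I : Type) : Prop :=
  dim_realizer r I /\ forall J : Type, dim_realizer r J -> card_le I J.

(* The boxes of a half-space al are linearly ordered by al, and each box is
   either a clique (full) or an antichain (empty) of al.  Refining that box order
   inside full boxes by a linear extension S of a partial order r, and inside
   empty boxes by some other linear order, gives a linear extension of r.  When
   the inner orders of the empty boxes are suitable reversals built from two
   distinct members of a half-space realizer of r, the resulting linear orders
   realize r; conversely every linear order pulls back to a half-space.  Applied
   to the quotient order r_g this gives dim = hsdim as soon as hsdim >= 2.  If
   hsdim = 1 then g is itself a half-space; r_g is a chain unless g has an empty
   box with two (incomparable) elements, and then the realizer {g, g} of size two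
   is turned into two linear orders. *)

From Stdlib Require Import Classical ClassicalEpsilon Relation_Definitions.
From Stdlib Require Import FunctionalExtensionality PropExtensionality ProofIrrelevance.
From mathcomp Require classical_sets boolp.

Set Implicit Arguments.
Unset Strict Implicit.

Lemma half_space_iff (P : Type) (al : rel P) :
  half_space al <-> quasiorder al /\
    (forall a b c, hs_complement al a b -> hs_complement al b c -> hs_complement al a c).
Proof.
  split.
  - intros [hq [be [[brefl btrans] [hu hi]]]]. split; [exact hq|].
    assert (hbe : forall a b, hs_complement al a b <-> be a b).
    { intros a b; split.
      - intros [<- | hn]; [apply brefl|]. destruct (hu a b); tauto.
      - intros h. destruct (classic (a = b)) as [e|ne]; [left; exact e|].
        right. intros h'. apply ne, hi. auto. }
    intros a b c h1 h2. apply hbe. apply hbe in h1, h2. eauto.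
  - intros [[arefl atrans] hc]. split; [split; assumption|].
    exists (hs_complement al). split; [split; [left; reflexivity|exact hc]|split].
    + intros a b. destruct (classic (al a b)); unfold hs_complement; tauto.
    + intros a b. unfold hs_complement. split; [tauto|intros <-; auto].
Qed.

Lemma half_space_not_trans (P : Type) (al : rel P) a b c :
  half_space al -> ~ al a b -> ~ al b c -> a = c \/ ~ al a c.
Proof. intros hal h1 h2. apply (proj2 (proj1 (half_space_iff al) hal) a b c); right; assumption. Qed.

Lemma half_space_comap_linear (A P : Type) (f : A -> P) (L : rel P) :
  linear_order L -> half_space (fun a b => L (f a) (f b)).
Proof.
  intros (Lrefl & Lanti & Ltrans & Ltot). apply half_space_iff.
  split; [split; eauto|].
  intros a b c [<- | nab] [<- | nbc]; try (left; reflexivity); try (right; assumption).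
  right; intros Lac.
  destruct (Ltot (f a) (f b)) as [|Lba]; [contradiction|].
  destruct (Ltot (f b) (f c)) as [|Lcb]; [contradiction|].
  assert (ac : f a = f c) by eauto. apply nab. rewrite ac. exact Lcb.
Qed.

Lemma linear_order_flip (P : Type) (L : rel P) :
  linear_order L -> linear_order (fun a b => L b a).
Proof. intros (Lrefl & Lanti & Ltrans & Ltot). repeat split; eauto. Qed.

Lemma order_add_pair (P : Type) (R : rel P) x y :
  order P R -> ~ R y x -> order P (fun a b => R a b \/ (R a x /\ R y b)).
Proof.
  intros [Rrefl Rtrans Ranti] nyx. split.
  - intros a; left; apply Rrefl.
  - intros a b c [ab | [ax yb]] [bc | [bx yc]].
    + left; eauto.
    + right; eauto.
    + right; eauto.
    + destruct nyx; eauto.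
  - intros a b [ab | [ax yb]] [ba | [bx ya]]; auto; destruct nyx; eauto.
Qed.

Lemma order_chain_union (P I : Type) (C : I -> Prop) (F : I -> rel P) (i0 : I) :
  C i0 -> (forall i, C i -> order P (F i)) ->
  (forall i j, C i -> C j -> inclusion P (F i) (F j) \/ inclusion P (F j) (F i)) ->
  order P (fun a b => exists i, C i /\ F i a b).
Proof.
  intros Ci0 hF hchain. split.
  - intros a. exists i0. split; [exact Ci0 | apply (hF i0 Ci0)].
  - intros a b c [i [Ci ab]] [j [Cj bc]].
    destruct (hchain i j Ci Cj) as [ij | ji].
    + exists j. split; [exact Cj | apply (hF j Cj) with b; auto].
    + exists i. split; [exact Ci | apply (hF i Ci) with b; auto].
  - intros a b [i [Ci ab]] [j [Cj ba]].
    destruct (hchain i j Ci Cj) as [ij | ji].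
    + apply (hF j Cj); auto.
    + apply (hF i Ci); auto.
Qed.

Lemma szpilrajn (P : Type) (r : rel P) : order P r -> exists L, linear_extension r L.
Proof.
  intros hr.
  pose (extends (R : rel P) := order P R /\ inclusion P r R).
  pose (T := sig extends).
  pose (sub (s t : T) := boolp.asbool (inclusion P (proj1_sig s) (proj1_sig t))).
  assert (subP : forall s t, is_true (sub s t) <-> inclusion P (proj1_sig s) (proj1_sig t))
    by (intros; split; [apply boolp.asboolW | apply boolp.asboolT]).
  destruct (@classical_sets.ZL_preorder T (exist extends r (conj hr (fun _ _ h => h))) sub)
    as [[M [hM rM]] Mmax].
  - intros s. apply subP. intros a b h; exact h.
  - intros s t u st tu. apply subP. apply subP in st, tu. intros a b h; auto.
  - intros A Atot. destruct (classic (exists s, A s)) as [[s0 As0] | nA].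
    + assert (hU : order P (fun a b => exists s, A s /\ proj1_sig s a b)).
      { apply (@order_chain_union P T A (fun s => proj1_sig s) s0 As0).
        - intros s _. apply (proj2_sig s).
        - intros s t As At. destruct (Atot s t As At); [left | right]; apply subP; auto. }
      assert (rU : inclusion P r (fun a b => exists s, A s /\ proj1_sig s a b))
        by (intros a b h; exists s0; split; [exact As0 | apply (proj2_sig s0), h]).
      exists (exist extends _ (conj hU rU)). intros s As. apply subP. intros a b h. simpl. eauto.
    + exists (exist extends r (conj hr (fun _ _ h => h))). intros s As. destruct nA. eauto.
  - exists M. split; [|exact rM].
    pose proof hM as [Mrefl Mtrans Manti].
    split; [exact Mrefl | split; [exact Manti | split; [exact Mtrans |]]].
    intros x y. apply NNPP. intros nxy.
    pose (M' a b := M a b \/ (M a x /\ M y b)).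
    assert (hM' : order P M') by (apply order_add_pair; [exact hM | tauto]).
    assert (rM' : inclusion P r M') by (intros a b h; left; apply rM, h).
    assert (M'M : inclusion P M' M).
    { apply (subP (exist extends M' (conj hM' rM')) (exist extends M (conj hM rM))).
      apply Mmax, subP.
      intros a b h; left; exact h. }
    apply nxy. left. apply M'M. right; split; apply Mrefl.
Qed.

Section BoxLex.

Variables (P : Type) (al U V : rel P).
Hypotheses (hal : half_space al) (hU : linear_order U) (hV : linear_order V).

Definition box_lex : rel P := fun a b =>
  (al a b /\ ~ al b a) \/ (al a b /\ al b a /\ U a b) \/ (~ al a b /\ ~ al b a /\ V a b).

Lemma box_lex_trans a b c : box_lex a b -> box_lex b c -> box_lex a c.
Proof.
  destruct hal as [[arefl atrans] _].
  destruct hU as (Urefl & _ & Utrans & _); destruct hV as (_ & _ & Vtrans & _).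
  unfold box_lex; intros hab hbc.
  destruct hab as [(ab & nba) | [(ab & ba & Uab) | (nab & nba & Vab)]];
  destruct hbc as [(bc & ncb) | [(bc & cb & Ubc) | (nbc & ncb & Vbc)]].
  - left; split; [eauto | intro; apply ncb; eauto].
  - left; split; [eauto | intro; apply nba; eauto].
  - left; split; [|intro; apply ncb; eauto].
    apply NNPP; intro nac.
    destruct (half_space_not_trans hal nac ncb) as [<- | nab]; [exact (nba (arefl a)) | contradiction].
  - left; split; [eauto | intro; apply ncb; eauto].
  - right; left; repeat split; eauto.
  - assert (nac : ~ al a c) by (intro; apply nbc; eauto).
    assert (nca : ~ al c a) by (intro; apply ncb; eauto).
    destruct (half_space_not_trans hal nac ncb) as [<- | nab]; [|contradiction].
    right; right; repeat split; auto.
  - left; split; [|intro; apply nba; eauto].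
    apply NNPP; intro nac.
    destruct (half_space_not_trans hal nba nac) as [<- | nbc]; [exact (ncb (arefl b)) | contradiction].
  - assert (nac : ~ al a c) by (intro; apply nab; eauto).
    assert (nca : ~ al c a) by (intro; apply nba; eauto).
    destruct (half_space_not_trans hal nca nab) as [-> | ]; [|contradiction].
    right; right; repeat split; auto.
  - destruct (half_space_not_trans hal nab nbc) as [<- | nac]; [right; left; repeat split; auto|].
    destruct (half_space_not_trans hal ncb nba) as [-> | nca]; [destruct (nac (arefl a)) |].
    right; right; repeat split; eauto.
Qed.

Lemma box_lex_linear_order : linear_order box_lex.
Proof.
  destruct hal as [[arefl _] _].
  destruct hU as (Urefl & Uanti & _ & Utot); destruct hV as (_ & Vanti & _ & Vtot).
  unfold box_lex; split; [|split; [|split]].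
  - intros a; right; left; auto.
  - intros a b hab hba; destruct hab as [? | [? | ?]], hba as [? | [? | ?]]; intuition.
  - exact box_lex_trans.
  - intros a b.
    destruct (classic (al a b)), (classic (al b a)), (Utot a b), (Vtot a b); tauto.
Qed.

End BoxLex.

Section LinearRealizer.

Variables (P K : Type) (r : rel P) (al : K -> rel P) (S : rel P) (k1 kn : K).
Hypotheses (hal : forall i, half_space (al i))
  (hreal : forall a b, (forall i, al i a b) <-> r a b)
  (hS : linear_extension r S) (hk : k1 <> kn).

(* If a pair (a, b) outside r survives every L i, then some al j misses it, so
   a and b share an empty box of al j; there Tn (or T1 when j = kn) sends the
   question to a common box of al kn and then of al k1, where S is forced in
   both directions. *)
Let Tn : rel P := fun a b => box_lex (al kn) S S b a.
Let T1 : rel P := fun a b => box_lex (al k1) S (fun x y => S y x) b a.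

Let L (i : K) : rel P :=
  box_lex (al i) S (if excluded_middle_informative (i = kn) then T1 else Tn).

Let L_kn : L kn = box_lex (al kn) S T1.
Proof. unfold L. destruct (excluded_middle_informative (kn = kn)); tauto. Qed.

Let L_other i : i <> kn -> L i = box_lex (al i) S Tn.
Proof. unfold L. destruct (excluded_middle_informative (i = kn)); tauto. Qed.

Let L_linear_extension i : linear_extension r (L i).
Proof.
  destruct hS as [Slin Sext].
  assert (Tn_lin : linear_order Tn)
    by (apply linear_order_flip, box_lex_linear_order; auto).
  assert (T1_lin : linear_order T1)
    by (apply linear_order_flip, box_lex_linear_order, linear_order_flip; auto).
  split.
  - unfold L. destruct (excluded_middle_informative (i = kn));
      apply box_lex_linear_order; auto.
  - intros a b hab. assert (ab : al i a b) by (apply hreal; exact hab).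
    assert (Sab := Sext a b hab). unfold L, box_lex. destruct (classic (al i b a)); tauto.
Qed.

Let L_meet_empty_kn a b :
  L kn a b -> L k1 a b -> ~ al kn a b -> ~ al kn b a -> a = b.
Proof.
  destruct hS as [(_ & Santi & _) _]. specialize (Santi a b).
  rewrite L_kn, (L_other hk). unfold T1, Tn, box_lex. tauto.
Qed.

Let L_meet a b : (forall i, L i a b) -> r a b.
Proof.
  intros hL. apply NNPP; intros nr.
  assert (ne : a <> b).
  { intros <-. apply nr, hreal. intros i. apply (hal i). }
  destruct (not_all_ex_not _ _ (fun h => nr (proj1 (hreal a b) h))) as [j nj].
  assert (hkn := hL kn). assert (hk1 := hL k1).
  assert (empty_kn := L_meet_empty_kn hkn hk1).
  destruct hS as [(_ & Santi & _) _]. specialize (Santi a b).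
  rewrite L_kn in hkn. unfold T1, box_lex in hkn.
  destruct (classic (j = kn)) as [-> | njkn].
  - tauto.
  - assert (hj := hL j). rewrite (L_other njkn) in hj.
    unfold Tn, box_lex in hj. tauto.
Qed.

Lemma dim_realizer_of_linear_extension : dim_realizer r K.
Proof.
  exists L. split; [exact L_linear_extension|].
  intros a b. split; [apply L_meet|].
  intros hab i. apply L_linear_extension, hab.
Qed.

End LinearRealizer.

Section Quotient.

Variables (A : Type) (g : rel A).
Hypothesis hg : quasiorder g.

Definition cls (a : A) : quot g := exist _ (gclass g a) (ex_intro _ a eq_refl).

Lemma quot_cls_surj (S : quot g) : exists a, S = cls a.
Proof. destruct S as [S [a ->]]. exists a. reflexivity. Qed.

Lemma gclass_inj a b : gclass g a = gclass g b -> g a b /\ g b a.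
Proof.
  intros e. assert (h : gclass g b a) by (rewrite <- e; split; apply hg).
  destruct h; split; assumption.
Qed.

Lemma cls_eq a b : g a b -> g b a -> cls a = cls b.
Proof.
  destruct hg as [_ gtrans]. intros ab ba. apply subset_eq_compat.
  apply functional_extensionality; intros x. apply propositional_extensionality.
  unfold gclass. split; intros [? ?]; split; eauto.
Qed.

Definition qlift (al : rel A) : rel (quot g) := fun S T =>
  exists a b, proj1_sig S = gclass g a /\ proj1_sig T = gclass g b /\ al a b.

Lemma qlift_cls (al : rel A) : quasiorder al -> inclusion A g al ->
  forall a b, qlift al (cls a) (cls b) <-> al a b.
Proof.
  intros [_ atrans] gal a b. split.
  - intros (a' & b' & ea & eb & h).
    destruct (gclass_inj ea), (gclass_inj eb). eauto.
  - intros h. exists a, b. auto.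
Qed.

Lemma r_of_cls a b : r_of g (cls a) (cls b) <-> g a b.
Proof. exact (qlift_cls hg (fun _ _ h => h) a b). Qed.

Lemma r_of_order : order (quot g) (r_of g).
Proof.
  destruct hg as [grefl gtrans]. split.
  - intros S. destruct (quot_cls_surj S) as [a ->]. apply r_of_cls, grefl.
  - intros S T U. destruct (quot_cls_surj S) as [a ->], (quot_cls_surj T) as [b ->],
      (quot_cls_surj U) as [c ->].
    rewrite !r_of_cls. eauto.
  - intros S T. destruct (quot_cls_surj S) as [a ->], (quot_cls_surj T) as [b ->].
    rewrite !r_of_cls. apply cls_eq.
Qed.

Lemma half_space_qlift (al : rel A) :
  half_space al -> inclusion A g al -> half_space (qlift al).
Proof.
  intros hal gal. pose proof (proj1 hal) as hq. pose proof hq as [arefl atrans].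
  apply half_space_iff. split; [split|].
  - intros S. destruct (quot_cls_surj S) as [a ->]. apply qlift_cls; auto.
  - intros S T U. destruct (quot_cls_surj S) as [a ->], (quot_cls_surj T) as [b ->],
      (quot_cls_surj U) as [c ->].
    rewrite !qlift_cls by auto. apply atrans.
  - intros S T U [<- | nST] [<- | nTU]; try (left; reflexivity); try (right; assumption).
    destruct (quot_cls_surj S) as [a ->], (quot_cls_surj T) as [b ->],
      (quot_cls_surj U) as [c ->].
    rewrite qlift_cls in nST, nTU by auto.
    destruct (half_space_not_trans hal nST nTU) as [<- | nac];
      [left; reflexivity | right; rewrite qlift_cls; auto].
Qed.

Lemma hs_realizer_qlift (K : Type) : hs_realizer g K -> hs_realizer (r_of g) K.
Proof.
  intros [al [hal hr]].
  assert (gal : forall i, inclusion A g (al i)) by (intros i a b h; apply hr, h).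
  exists (fun i => qlift (al i)). split.
  - intros i. apply half_space_qlift; auto.
  - intros S T. destruct (quot_cls_surj S) as [a ->], (quot_cls_surj T) as [b ->].
    rewrite r_of_cls, <- hr. split; intros h i; apply (qlift_cls (proj1 (hal i)) (gal i)), h.
Qed.

Lemma hs_realizer_of_dim_realizer (J : Type) : dim_realizer (r_of g) J -> hs_realizer g J.
Proof.
  intros [L [hL hr]].
  exists (fun j a b => L j (cls a) (cls b)). split.
  - intros j. apply half_space_comap_linear, hL.
  - intros a b. rewrite <- r_of_cls. apply hr.
Qed.

End Quotient.

Lemma card_le_unit (J : Type) (j : J) : card_le unit J.
Proof. exists (fun _ => j). intros [] [] _. reflexivity. Qed.

Lemma card_le_bool (J : Type) (j1 j2 : J) : j1 <> j2 -> card_le bool J.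
Proof.
  intros ne. exists (fun b : bool => if b then j1 else j2).
  intros [] [] e; try reflexivity; destruct ne; [exact e | symmetry; exact e].
Qed.

Lemma dim_realizer_card_unit (P J : Type) (r : rel P) a b :
  dim_realizer r J -> ~ r a b -> card_le unit J.
Proof.
  intros [L [_ hr]] nab. apply NNPP; intros nJ. apply nab, hr.
  intros j. destruct (nJ (card_le_unit j)).
Qed.

Lemma dim_realizer_card_bool (P J : Type) (r : rel P) a b :
  dim_realizer r J -> ~ r a b -> ~ r b a -> card_le bool J.
Proof.
  intros hJ nab nba. destruct (dim_realizer_card_unit hJ nab) as [f _].
  destruct hJ as [L [hL hr]].
  destruct (classic (forall j, j = f tt)) as [single | [j nj]%not_all_ex_not];
    [|exact (card_le_bool nj)].
  destruct (hL (f tt)) as [(_ & _ & _ & Ltot) _]. exfalso.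
  destruct (Ltot a b) as [h | h]; [apply nab | apply nba]; apply hr;
    intros j; rewrite (single j); exact h.
Qed.

Lemma hs_realizer_unit (A : Type) (g : rel A) : hs_realizer g unit -> half_space g.
Proof.
  intros [al [hal hr]].
  replace g with (al tt); [exact (hal tt)|].
  apply functional_extensionality; intros a; apply functional_extensionality; intros b.
  apply propositional_extensionality. rewrite <- hr. split; [intros h []; exact h | auto].
Qed.

Lemma is_hsdim_unit_not_full (A : Type) (g : rel A) :
  is_hsdim g unit -> exists a b, ~ g a b.
Proof.
  intros [_ hmin]. apply NNPP; intros full.
  assert (h0 : hs_realizer g Empty_set).
  { exists (fun e : Empty_set => match e with end). split; [intros []|].
    intros a b. split; [|intros _ []].
    intros _. apply NNPP; intros nab. apply full. eauto. }
  destruct (hmin _ h0) as [f _]. destruct (f tt).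
Qed.

Section Boxes.

Variables (A : Type) (al : rel A) (a b : A).
Hypotheses (hal : half_space al) (nab : ~ al a b) (nba : ~ al b a).

Lemma box_rel_incomparable x : box_rel al a x -> x = a \/ (~ al a x /\ ~ al x a).
Proof.
  intros [[ax xa] | [[e | nax] [e' | nxa]]]; try (left; congruence); [|right; split; assumption].
  assert (nxb : ~ al x b) by (intros xb; apply nab; exact (proj2 (proj1 hal) _ _ _ ax xb)).
  destruct (half_space_not_trans hal nxb nba) as [| nxa]; auto.
Qed.

Lemma empty_box_incomparable : empty_box al (box_rel al a).
Proof.
  intros x y hx hy. split; [|intros <-; apply hal].
  intros xy.
  destruct (box_rel_incomparable hx) as [-> | [nax nxa]],
    (box_rel_incomparable hy) as [-> | [nay nya]]; try tauto.
  destruct (half_space_not_trans hal nxa nay); tauto.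
Qed.

Lemma has_big_empty_box_incomparable : has_big_empty_box al.
Proof.
  exists (box_rel al a). split; [exists a; reflexivity | split; [exact empty_box_incomparable|]].
  exists a, b. split; [left; split; apply hal|]. split.
  - right. split; right; assumption.
  - intros <-. apply nab, hal.
Qed.

End Boxes.

Lemma has_big_empty_box_incomparable_pair (A : Type) (al : rel A) :
  has_big_empty_box al -> exists a b, ~ al a b /\ ~ al b a.
Proof.
  intros (B & _ & hB & x & y & hx & hy & ne). exists x, y.
  split; intros h; apply ne; [apply (hB x y) | symmetry; apply (hB y x)]; auto.
Qed.

Section Dimension.

Variables (A : Type) (g : rel A).
Hypothesis hg : quasiorder g.

Lemma dim_realizer_of_hs_realizer (K : Type) (k1 kn : K) :
  k1 <> kn -> hs_realizer g K -> dim_realizer (r_of g) K.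
Proof.
  intros hk hK. destruct (hs_realizer_qlift hg hK) as [al [hal hr]].
  destruct (szpilrajn (r_of_order hg)) as [S hS].
  exact (dim_realizer_of_linear_extension hal hr hS hk).
Qed.

Lemma is_dim_of_is_hsdim (K : Type) :
  is_hsdim g K -> card_le bool K -> is_dim (r_of g) K.
Proof.
  intros [hK hmin] [f hf]. split.
  - apply (dim_realizer_of_hs_realizer (k1 := f true) (kn := f false)); [|exact hK].
    intros e. discriminate (hf _ _ e).
  - intros J hJ. apply hmin, hs_realizer_of_dim_realizer; assumption.
Qed.

Lemma is_dim_unit_of_no_big_empty_box :
  half_space g -> (exists a b, ~ g a b) -> ~ has_big_empty_box g -> is_dim (r_of g) unit.
Proof.
  intros hsg [a [b nab]] nbox.
  assert (tot : forall S T, r_of g S T \/ r_of g T S).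
  { intros S T. destruct (quot_cls_surj S) as [x ->], (quot_cls_surj T) as [y ->].
    rewrite !r_of_cls by exact hg. apply NNPP; intros nxy. apply nbox.
    apply (has_big_empty_box_incomparable (a := x) (b := y)); tauto. }
  destruct (r_of_order hg) as [rrefl rtrans ranti].
  split.
  - exists (fun _ => r_of g). split.
    + intros _. split; [repeat split; auto | auto].
    + intros S T. split; [intros h; exact (h tt) | intros h _; exact h].
  - intros J hJ. apply (dim_realizer_card_unit (a := cls g a) (b := cls g b) hJ).
    rewrite r_of_cls; assumption.
Qed.

Lemma is_dim_bool_of_big_empty_box :
  half_space g -> has_big_empty_box g -> is_dim (r_of g) bool.
Proof.
  intros hsg hbox. split.
  - apply (dim_realizer_of_hs_realizer (k1 := true) (kn := false)); [discriminate|].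
    exists (fun _ => g). split; [auto|].
    intros a b. split; [intros h; exact (h true) | auto].
  - intros J hJ. destruct (has_big_empty_box_incomparable_pair hbox) as (a & b & nab & nba).
    apply (dim_realizer_card_bool (a := cls g a) (b := cls g b) hJ); rewrite r_of_cls; assumption.
Qed.

End Dimension.

Theorem theorem2p15 (A : Type) (g : rel A) (hg : quasiorder g) :
  (is_hsdim g unit ->
     half_space g /\
     (~ has_big_empty_box g -> is_dim (r_of g) unit) /\
     (has_big_empty_box g -> is_dim (r_of g) bool)) /\
  (forall K : Type, is_hsdim g K -> card_le bool K -> is_dim (r_of g) K).
Proof.
  split.
  - intros hd. assert (hsg : half_space g) by exact (hs_realizer_unit (proj1 hd)).
    split; [exact hsg | split].
    + exact (is_dim_unit_of_no_big_empty_box hg hsg (is_hsdim_unit_not_full hd)).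
    + exact (is_dim_bool_of_big_empty_box hg hsg).
  - intros K. exact (is_dim_of_is_hsdim hg (K := K)).
Qed.
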